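(* Let $\hat W_k,\hat W_{k+1}\in B(\mathcal X;1)$ be fixed, $\eta$ a probability distribution on $A\setminus K$, $\tilde M\ge1$. Let $x\sim\eta$ and, conditionally on $x$, for each $a\in\mathcal A$ let $y_1^{a,1},\dots,y_1^{a,\tilde M}$ and $y_2^{a,1},\dots,y_2^{a,\tilde M}$ be mutually independent i.i.d. draws from $T(\cdot\mid x,a)$. For $\alpha=1,2$ define $\hat{\mathsf T}^a_\alpha\hat W_{k+1}(x)=\frac1{\tilde M}\sum_{j=1}^{\tilde M}[\mathbf 1_K(y_\alpha^{a,j})+\mathbf 1_{A\setminus K}(y_\alpha^{a,j})\hat W_{k+1}(y_\alpha^{a,j})]$. Then $$\|\hat W_k-\mathsf T\hat W_{k+1}\|_{1,\eta}\le\mathbf E\Big[\big|\hat W_k(x)-\max_{a\in\mathcal A}\hat{\mathsf T}^a_1\hat W_{k+1}(x)\big|\Big]+\mathbf E\Big[\max_{a\in\mathcal A}\big|\hat{\mathsf T}^a_1\hat W_{k+1}(x)-\hat{\mathsf T}^a_2\hat W_{k+1}(x)\big|\Big].$$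
   Context: Controlled Markov process on $\mathcal X\subset\mathbb R^n$, finite action set $\mathcal A$, kernel $T(\cdot\mid x,a)$; Borel safe set $A$ and target set $K$. $B(\mathcal X;1)$: measurable functions $\mathcal X\to[0,1]$. $(\mathsf TW)(x)=\max_{a}\mathbf E[\mathbf 1_K(y)+\mathbf 1_{A\setminus K}(y)W(y)]$, $y\sim T(\cdot\mid x,a)$. $\|f\|_{1,\eta}=\int_{A\setminus K}|f|\,d\eta$. *)

From HB Require Import structures.
From mathcomp Require Import all_boot all_order all_algebra.
From mathcomp Require Import all_classical all_reals all_analysis.
Set Implicit Arguments. Unset Strict Implicit. Unset Printing Implicit Defensive.
Import Order.TTheory GRing.Theory Num.Theory.
Local Open Scope classical_set_scope.
Local Open Scope ring_scope.

Section Defs.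
Context (R : realType) (dX : measure_display) (X : measurableType dX)
  (Act : finType).

Definition inB1 (W : X -> R) : Prop :=
  measurable_fun setT W /\ (forall x, 0 <= W x <= 1).

Definition stepfun (SA SK : set X) (W : X -> R) (y : X) : R :=
  \1_SK y + \1_(SA `\` SK) y * W y.

Definition Top (T : Act -> R.-pker X ~> X) (SA SK : set X) (W : X -> R)
  (x : X) : \bar R :=
  \big[maxe/-oo%E]_(a : Act) (\int[T a x]_y (stepfun SA SK W y)%:E)%E.

Definition norm1 (eta : probability X R) (SA SK : set X) (f : X -> \bar R)
  : \bar R := (\int[eta]_(x in SA `\` SK) `|f x|)%E.

Definition That (M : nat) (SA SK : set X) (W : X -> R) (ys : 'I_M -> X) : R :=
  M%:R^-1 * \sum_(j < M) stepfun SA SK W (ys j).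

(* Joint law of (x, (y_alpha^{a,j})): x ~ eta, and conditionally on x the
   y_alpha^{a,j} are mutually independent with law T(.|x,a).  Stated on
   measurable rectangles (which determine the joint law). *)
Definition sampling_law (dO : measure_display) (Omega : measurableType dO)
  (P : probability Omega R) (T : Act -> R.-pker X ~> X)
  (eta : probability X R) (M : nat) (x : Omega -> X)
  (y : 'I_2 -> Act -> 'I_M -> Omega -> X) : Prop :=
  forall (B : set X) (C : 'I_2 -> Act -> 'I_M -> set X),
    measurable B -> (forall i a j, measurable (C i a j)) ->
    P [set w | B (x w) /\ forall i a j, C i a j (y i a j w)] =
    (\int[eta]_(z in B)
       (\prod_(i < 2) \prod_(a : Act) \prod_(j < M) fine (T a z (C i a j)))%:E)%E.

End Defs.

From HB Require Import structures.
From mathcomp Require Import all_boot all_order all_algebra.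
From mathcomp Require Import all_classical all_reals all_analysis.
From mathcomp Require Import measurable_realfun lra.
Set Implicit Arguments. Unset Strict Implicit. Unset Printing Implicit Defensive.
Import Order.TTheory GRing.Theory Num.Theory.
Local Open Scope classical_set_scope.
Local Open Scope ring_scope.
Import HBNNSimple.

(** Write [q a x] for the Bellman backup of action [a] at [x] and [u a], [t a] for
    its empirical estimates from the two samples.  By the triangle inequality through
    [max_a u a] it suffices to bound [E |max_a u a - max_a q a x|] by
    [E max_a |u a - t a|].  Pointwise, if [max q <= max u] and [a] is the first
    maximizer of [u], then [|max u - max q| <= u a - q a x
    <= |u a - t a| + (t a - q a x)]; otherwise, with [a] the first maximizer of [q],
    [|max u - max q| <= |u a - t a| + (q a x - t a)].  Both the case and [a] are
    functions of [(x, y_1)], and conditionally on [(x, y_1)] the second-sample estimate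
    [t a] is unbiased for [q a x], so the correction terms integrate to zero.
    Conditional unbiasedness is read off the sampling law on rectangles and extended
    to the sigma-algebra of [(x, y_1)] by Dynkin's pi-lambda theorem. *)

(** * Integrals against mixtures of measures *)

Section mixture_integral.
Local Open Scope ereal_scope.
Context (R : realType) d d' (Z : measurableType d) (Y : measurableType d').
Variables (mu : {measure set Z -> \bar R}) (h : Z -> R)
  (k : Z -> {measure set Y -> \bar R}).
Hypotheses (h_ge0 : forall z, (0 <= h z)%R) (mh : measurable_fun setT h)
  (mk : forall U, measurable U -> measurable_fun setT (k ^~ U)).

(* The integral of [g] against the measure [C |-> \int[mu]_z h z * k z C]. *)
Definition mixture_integral (g : Y -> R) :=
  \int[mu]_z ((h z)%:E * \int[k z]_y (g y)%:E).

Lemma mixture_integral_nnsfun (f : {nnsfun Y >-> R}) :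
  mixture_integral f =
  \sum_(r \in range f) r%:E * \int[mu]_z ((h z)%:E * k z (f @^-1` [set r])).
Proof.
rewrite /mixture_integral.
under eq_integral => z _.
  rewrite integralT_nnsfun sintegralE ge0_mule_fsumr; last first.
    by move=> r; exact: nnsfun_mulemu_ge0.
  over.
rewrite /= ge0_integral_fsum//; last 2 first.
- move=> r; apply: emeasurable_funM; first exact/measurable_EFinP.
  by apply: emeasurable_funM; [exact: measurable_cst|exact: mk].
- by move=> r z _; rewrite mule_ge0 ?lee_fin// nnsfun_mulemu_ge0.
apply: eq_fsbigr => r _.
have [r0|r0] := leP 0%R r.
  under eq_integral do rewrite muleCA.
  rewrite ge0_integralZl//.
  - by apply: emeasurable_funM; [exact/measurable_EFinP|exact: mk].
  - by move=> z _; rewrite mule_ge0// lee_fin.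
rewrite preimage_nnfun0//.
rewrite integral0_eq; last by move=> z _; rewrite measure0 !mule0.
by rewrite integral0_eq ?mule0// => z _; rewrite measure0 mule0.
Qed.

Lemma mixture_integral_approx (g : Y -> R) (g_ge0 : forall y, (0 <= g y)%R)
    (mg : measurable_fun setT (EFin \o g)) :
  mixture_integral g =
  limn (fun n => mixture_integral (nnsfun_approx measurableT mg n)).
Proof.
set g_ := nnsfun_approx measurableT mg.
have nd_g y : {homo (fun n => (g_ n y)%:E) : n m / (n <= m)%N >-> n <= m}.
  by move=> a b ab; rewrite lee_fin; exact/lefP/nd_nnsfun_approx.
have nd_int z : {homo (fun n => \int[k z]_y (g_ n y)%:E) : n m / (n <= m)%N >-> n <= m}.
  move=> a b ab; apply: ge0_le_integral => //.
  - by move=> y _; rewrite lee_fin.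
  - exact/measurable_EFinP.
  - exact/measurable_EFinP.
  - by move=> y _; exact: nd_g.
have inner z : \int[k z]_y (g y)%:E = limn (fun n => \int[k z]_y (g_ n y)%:E).
  transitivity (\int[k z]_y limn (fun n => (g_ n y)%:E)).
    apply: eq_integral => y _; apply/esym/cvg_lim => //.
    by apply: cvg_nnsfun_approx => // y' _; rewrite lee_fin.
  apply: monotone_convergence => //.
  - by move=> n; exact/measurable_EFinP.
  - by move=> n y _; rewrite lee_fin.
rewrite /mixture_integral.
transitivity (\int[mu]_z limn (fun n => (h z)%:E * \int[k z]_y (g_ n y)%:E)).
  apply: eq_integral => z _; rewrite inner limeMl//.
  exact: ereal_nondecreasing_is_cvgn.
apply: monotone_convergence => //.
- move=> n; apply: emeasurable_funM; first exact/measurable_EFinP.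
  apply: measurable_fun_integral_kernel => //.
  + by move=> y; rewrite lee_fin.
  + exact/measurable_EFinP.
- by move=> n z _; rewrite mule_ge0 ?lee_fin// integral_ge0// => y _; rewrite lee_fin.
- by move=> z _ a b ab; rewrite lee_wpmul2l ?lee_fin//; exact: nd_int.
Qed.

End mixture_integral.

Section eq_mixture_integral.
Local Open Scope ereal_scope.
Context (R : realType) d1 d2 d' (Z1 : measurableType d1)
  (Z2 : measurableType d2) (Y : measurableType d').
Variables (mu1 : {measure set Z1 -> \bar R}) (h1 : Z1 -> R)
  (k1 : Z1 -> {measure set Y -> \bar R}).
Variables (mu2 : {measure set Z2 -> \bar R}) (h2 : Z2 -> R)
  (k2 : Z2 -> {measure set Y -> \bar R}).
Hypotheses (h1_ge0 : forall z, (0 <= h1 z)%R) (mh1 : measurable_fun setT h1)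
  (mk1 : forall U, measurable U -> measurable_fun setT (k1 ^~ U)).
Hypotheses (h2_ge0 : forall z, (0 <= h2 z)%R) (mh2 : measurable_fun setT h2)
  (mk2 : forall U, measurable U -> measurable_fun setT (k2 ^~ U)).
Hypothesis eq_mixture_measure : forall C, measurable C ->
  \int[mu1]_z ((h1 z)%:E * k1 z C) = \int[mu2]_z ((h2 z)%:E * k2 z C).

Lemma eq_mixture_integral (g : Y -> R) :
  (forall y, (0 <= g y)%R) -> measurable_fun setT g ->
  mixture_integral mu1 h1 k1 g = mixture_integral mu2 h2 k2 g.
Proof.
move=> g_ge0 /measurable_EFinP mg.
rewrite (mixture_integral_approx mu1 h1_ge0 mh1 mk1 g_ge0 mg).
rewrite (mixture_integral_approx mu2 h2_ge0 mh2 mk2 g_ge0 mg).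
congr (limn _); apply/funext => n.
rewrite !mixture_integral_nnsfun//.
by apply: eq_fsbigr => r _; rewrite eq_mixture_measure.
Qed.

End eq_mixture_integral.

(** * First maximizers *)

Section first_argmax.
Context (R : realDomainType) (I : finType).

(* Ties are broken by [enum_rank], which makes the maximizer unique. *)
Definition first_argmax (f : I -> R) (a : I) : Prop :=
  (forall b, f b <= f a) /\ (forall b, (enum_rank b < enum_rank a)%N -> f b < f a).

Lemma first_argmax_uniq f a b : first_argmax f a -> first_argmax f b -> a = b.
Proof.
move=> [fa_max fa_first] [fb_max fb_first]; apply: enum_rank_inj.
case: (ltngtP (enum_rank a) (enum_rank b)) => [ab|ba|/val_inj //].
  by have := fb_first a ab; rewrite ltNge fa_max.
by have := fa_first b ba; rewrite ltNge fb_max.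
Qed.

Lemma first_argmax_exists f (i0 : I) : exists a, first_argmax f a.
Proof.
have [a0 _ a0_max] : extremum_spec (>=%O) xpredT f [arg max_(i > i0) f i]%O.
  exact: arg_maxP.
have [b /eqP fb b_first] : extremum_spec leq (fun c => f c == f a0) (@enum_rank I)
    [arg min_(c < a0 | f c == f a0) enum_rank c].
  exact: arg_minnP.
have {}a0_max c : f c <= f a0 by exact: a0_max.
exists b; split=> [c|c lt_cb]; rewrite fb //.
rewrite lt_neqAle a0_max andbT; apply/negP => /b_first.
by rewrite leqNgt lt_cb.
Qed.

Lemma bigmax0_attained (f : I -> R) a : (forall b, 0 <= f b) ->
  (forall b, f b <= f a) -> \big[Num.max/0]_b f b = f a.
Proof.
by move=> f_ge0 fa; apply/eqP; rewrite eq_le le_bigmax andbT bigmax_le.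
Qed.

Lemma bigmax_dist_le (u v : I -> R) a :
  (forall b, 0 <= u b) -> (forall b, u b <= u a) ->
  \big[Num.max/0]_b v b <= \big[Num.max/0]_b u b ->
  `|\big[Num.max/0]_b u b - \big[Num.max/0]_b v b| <= u a - v a.
Proof.
move=> u_ge0 ua vu; rewrite ger0_norm ?subr_ge0// (bigmax0_attained u_ge0 ua).
by rewrite lerD2l lerN2 le_bigmax.
Qed.

End first_argmax.

Lemma bigmaxe_EFin (R : realType) (I : finType) (f : I -> R) (i0 : I) :
  (forall b, 0 <= f b) ->
  (\big[maxe/-oo]_b (f b)%:E = (\big[Num.max/0]_b f b)%:E)%E.
Proof.
move=> f_ge0; apply/eqP; rewrite eq_le; apply/andP; split.
  by apply: bigmax_le => [|b _]; [exact: leNye|rewrite lee_fin le_bigmax].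
rewrite -EFin_bigmax; apply: bigmax_le => [|b _]; last exact: le_bigmax.
by apply: le_trans (le_bigmax _ _ i0); rewrite lee_fin.
Qed.

Section measurable_max.
Context d (T : measurableType d) (R : realType).

Lemma measurable_bigmax (I : Type) (s : seq I) (F : I -> T -> R) :
  (forall i, measurable_fun setT (F i)) ->
  measurable_fun setT (fun w => \big[Num.max/0]_(i <- s) F i w).
Proof.
move=> mF; elim: s => [|i s IH].
  by under eq_fun do rewrite big_nil; exact: measurable_cst.
under eq_fun do rewrite big_cons.
exact: measurable_maxr.
Qed.

Lemma measurable_ler (f g : T -> R) : measurable_fun setT f ->
  measurable_fun setT g -> measurable [set w | f w <= g w].
Proof.
move=> mf mg; have := measurable_fun_ler mf mg measurableT (Y := [set true]).
by rewrite setTI; apply.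
Qed.

Lemma measurable_ltr (f g : T -> R) : measurable_fun setT f ->
  measurable_fun setT g -> measurable [set w | f w < g w].
Proof.
move=> mf mg; have := measurable_fun_ltr mf mg measurableT (Y := [set true]).
by rewrite setTI; apply.
Qed.

Lemma measurable_first_argmax (I : finType) (F : I -> T -> R) a :
  (forall b, measurable_fun setT (F b)) ->
  measurable [set w | first_argmax (fun b => F b w) a].
Proof.
move=> mF.
have -> : [set w | first_argmax (fun b => F b w) a] =
    \bigcap_(b in [set: I]) [set w | F b w <= F a w] `&`
    \bigcap_(b in [set b | (enum_rank b < enum_rank a)%N]) [set w | F b w < F a w].
  apply/seteqP; split => w /=.
    by move=> [Fa_max Fa_first]; split => b /= hb; [exact: Fa_max|exact: Fa_first].
  by move=> [Fa_max Fa_first]; split => [b|b hb]; [exact: Fa_max|exact: Fa_first].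
apply: measurableI; apply: fin_bigcap_measurable; try exact: finite_finset.
- by move=> b _; exact: measurable_ler.
- by move=> b _; exact: measurable_ltr.
Qed.

End measurable_max.

Section indic_sum.
Context (R : realType) (I : finType) (T : Type).

Definition indic_sum (A : I -> set T) (f : I -> T -> R) (w : T) : R :=
  \sum_a \1_(A a) w * f a w.

Lemma indic_sum_single A f a w : (forall b, A b w <-> b = a) ->
  indic_sum A f w = f a w.
Proof.
move=> Aa; rewrite /indic_sum (bigD1 a)//= big1 ?addr0.
  by rewrite indicE mem_set ?mul1r//; exact/Aa.
by move=> b /eqP ba; rewrite indicE memNset ?mul0r// => /Aa.
Qed.

Lemma indic_sum0 A f w : (forall b, ~ A b w) -> indic_sum A f w = 0.
Proof. by move=> A0; rewrite /indic_sum big1// => b _; rewrite indicE memNset ?mul0r. Qed.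

Lemma indic_sum_ge0 A f w : (forall a, 0 <= f a w) -> 0 <= indic_sum A f w.
Proof. by move=> f_ge0; apply: sumr_ge0 => a _; rewrite mulr_ge0. Qed.

End indic_sum.

Section integral_lemmas.
Local Open Scope ereal_scope.
Context d (T : measurableType d) (R : realType) (mu : {measure set T -> \bar R}).

Lemma integral_in_indic (D : set T) (f : T -> \bar R) :
  \int[mu]_(w in D) f w = \int[mu]_w ((\1_D w)%:E * f w).
Proof.
rewrite integral_mkcond epatch_indic; apply: eq_integral => w _.
by rewrite /= muleC.
Qed.

Lemma integral_dirac_EFin (v : T) (g : T -> R) :
  measurable_fun setT g -> \int[\d_v]_w (g w)%:E = (g v)%:E.
Proof.
move=> mg; rewrite integral_dirac//; last exact/measurable_EFinP.
by rewrite diracT mul1e.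
Qed.

Lemma integral_indic_dirac d' (Y : measurableType d') (D : set T) (f : T -> Y)
    (C : set Y) :
  measurable D -> measurable_fun setT f -> measurable C ->
  \int[mu]_w ((\1_D w)%:E * \d_(f w) C) = mu (D `&` f @^-1` C).
Proof.
move=> mD mf mC.
have mfC : measurable (f @^-1` C) by rewrite -[_ @^-1` _]setTI; exact: mf.
rewrite -[X in mu X]setIT -integral_indic//; last exact: measurableI.
by apply: eq_integral => w _; rewrite /dirac -EFinM indicI.
Qed.

Lemma eq_integral_setC (S : set T) (f h : T -> R) :
  measurable S -> measurable_fun setT f -> measurable_fun setT h ->
  (forall w, 0 <= f w)%R -> (forall w, 0 <= h w)%R ->
  \int[mu]_(w in S) (h w)%:E \is a fin_num ->
  \int[mu]_w (f w)%:E = \int[mu]_w (h w)%:E ->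
  \int[mu]_(w in S) (f w)%:E = \int[mu]_(w in S) (h w)%:E ->
  \int[mu]_(w in ~` S) (f w)%:E = \int[mu]_(w in ~` S) (h w)%:E.
Proof.
move=> mS mf mh f_ge0 h_ge0 hS_fin eqT eqS.
have splitS (k : T -> R) : measurable_fun setT k -> (forall w, 0 <= k w)%R ->
    \int[mu]_w (k w)%:E =
    \int[mu]_(w in S) (k w)%:E + \int[mu]_(w in ~` S) (k w)%:E.
  move=> mk k_ge0; rewrite -ge0_integral_setU ?setUCr//.
  - exact: measurableC.
  - exact/measurable_EFinP.
  - by move=> w _; rewrite lee_fin.
  - by rewrite disj_set2E setICr.
move: eqT; rewrite (splitS f)// (splitS h)// eqS.
move=> /(congr1 (fun e => e - \int[mu]_(w in S) (h w)%:E)).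
by rewrite ![\int[mu]_(w in S) _ + _]addeC !addeK.
Qed.

Lemma ge0_integralD_EFin (f h : T -> R) :
  measurable_fun setT f -> measurable_fun setT h ->
  (forall w, 0 <= f w)%R -> (forall w, 0 <= h w)%R ->
  \int[mu]_w (f w + h w)%:E = \int[mu]_w (f w)%:E + \int[mu]_w (h w)%:E.
Proof.
move=> mf mh f_ge0 h_ge0; under eq_integral do rewrite EFinD.
by apply: ge0_integralD => //; [move=> w _; rewrite lee_fin|exact/measurable_EFinP
  |move=> w _; rewrite lee_fin|exact/measurable_EFinP].
Qed.

Lemma le_integral_add_cancel (f g h k : T -> R) :
  measurable_fun setT f -> measurable_fun setT g ->
  measurable_fun setT h -> measurable_fun setT k ->
  (forall w, 0 <= f w)%R -> (forall w, 0 <= g w)%R ->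
  (forall w, 0 <= h w)%R -> (forall w, 0 <= k w)%R ->
  (forall w, f w + h w <= g w + k w)%R ->
  \int[mu]_w (h w)%:E = \int[mu]_w (k w)%:E ->
  \int[mu]_w (h w)%:E \is a fin_num ->
  \int[mu]_w (f w)%:E <= \int[mu]_w (g w)%:E.
Proof.
move=> mf mg mh mk f_ge0 g_ge0 h_ge0 k_ge0 fh_gk eq_hk h_fin.
rewrite -(leeD2rE _ _ h_fin) [X in _ <= _ + X]eq_hk.
rewrite -!ge0_integralD_EFin//; apply: ge0_le_integral => //.
- by move=> w _; rewrite lee_fin addr_ge0.
- by apply/measurable_EFinP; exact: measurable_funD.
- by apply/measurable_EFinP; exact: measurable_funD.
- by move=> w _; rewrite lee_fin.
Qed.

Lemma integral_indic_sum (I : finType) (A : I -> set T) (f : I -> T -> R) :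
  (forall a, measurable (A a)) -> (forall a, measurable_fun setT (f a)) ->
  (forall a w, 0 <= f a w)%R ->
  \int[mu]_w (indic_sum A f w)%:E = \sum_a \int[mu]_(w in A a) (f a w)%:E.
Proof.
move=> mA mf f_ge0; rewrite /indic_sum; under eq_integral do rewrite -sumEFin.
rewrite ge0_integral_sum//.
- apply: eq_bigr => a _; rewrite [RHS]integral_in_indic.
  by apply: eq_integral => w _; rewrite EFinM.
- move=> a; apply/measurable_EFinP.
  by apply: measurable_funM => //; exact: measurable_indic.
- by move=> a w _; rewrite lee_fin mulr_ge0.
Qed.

Lemma measurable_indic_sum (I : finType) (A : I -> set T) (f : I -> T -> R) :
  (forall a, measurable (A a)) -> (forall a, measurable_fun setT (f a)) ->
  measurable_fun setT (indic_sum A f).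
Proof.
move=> mA mf; apply: measurable_sum => a.
by apply: measurable_funM => //; exact: measurable_indic.
Qed.

Lemma integral_full_set (D : set T) (f : T -> \bar R) :
  measurable D -> mu (~` D) = 0 -> measurable_fun setT f ->
  (forall w, 0 <= f w) -> \int[mu]_(w in D) f w = \int[mu]_w f w.
Proof.
move=> mD D0 mf f_ge0.
transitivity (\int[mu]_(w in D `|` ~` D) f w); last by rewrite setUCr.
rewrite ge0_integral_setU//.
- by rewrite [X in _ + X]null_set_integral ?adde0//;
    [exact: measurableC|exact: measurable_funTS].
- exact: measurableC.
- exact: measurable_funTS.
- by rewrite disj_set2E setICr.
Qed.

End integral_lemmas.

(** * The sampling law *)

Lemma ord2_cases (i : 'I_2) : i = ord0 \/ i = lift ord0 ord0.
Proof. by case: i => [[|[|//]] Hi]; [left|right]; exact: val_inj. Qed.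

Section sampling.
Local Open Scope ereal_scope.
Context (R : realType) (dX : measure_display) (X : measurableType dX)
  (Act : finType) (T : Act -> R.-pker X ~> X) (eta : probability X R) (M : nat)
  (dO : measure_display) (Omega : measurableType dO) (P : probability Omega R)
  (x : Omega -> X) (y : 'I_2 -> Act -> 'I_M -> Omega -> X).
Hypothesis mx : measurable_fun setT x.
Hypothesis my : forall i a j, measurable_fun setT (y i a j).
Hypothesis law : sampling_law P T eta x y.

Let y1 := y ord0.
Let y2 := y (lift ord0 ord0).

Definition rect (B : set X) (Cs : Act -> 'I_M -> set X) : set Omega :=
  [set w | B (x w) /\ forall a j, Cs a j (y1 a j w)].

Definition kprod_mass (Cs : Act -> 'I_M -> set X) (z : X) : R :=
  (\prod_a \prod_(j < M) fine (T a z (Cs a j)))%R.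

Lemma fine_kernel_setT a z : fine (T a z setT) = 1%R.
Proof. by rewrite prob_kernel. Qed.

Lemma kernel_fin_num a z C : measurable C -> T a z C \is a fin_num.
Proof.
move=> mC; rewrite ge0_fin_numE// (@le_lt_trans _ _ 1)// ?ltry//.
apply: (@le_trans _ _ (T a z setT)); first by apply: le_measure; rewrite ?inE.
by rewrite prob_kernel.
Qed.

Lemma kprod_mass_setT z : kprod_mass (fun _ _ => setT) z = 1%R.
Proof.
by rewrite /kprod_mass big1// => a _; rewrite big1// => j _; exact: fine_kernel_setT.
Qed.

Lemma kprod_mass_single a j C z :
  kprod_mass (fun b k => if (b == a) && (k == j) then C else setT) z =
  fine (T a z C).
Proof.
rewrite /kprod_mass (bigD1 a)//= (bigD1 j)//= !eqxx big1 ?mulr1; last first.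
  by move=> k /negbTE ->; rewrite andbF fine_kernel_setT.
rewrite big1 ?mulr1// => b /negbTE ->; rewrite big1// => k _.
exact: fine_kernel_setT.
Qed.

Lemma kprod_mass_ge0 Cs z : (0 <= kprod_mass Cs z)%R.
Proof. by apply: prodr_ge0 => a _; apply: prodr_ge0 => j _; exact: fine_ge0. Qed.

Lemma measurable_kprod_mass Cs : (forall a j, measurable (Cs a j)) ->
  measurable_fun setT (kprod_mass Cs).
Proof.
move=> mCs; apply: measurable_prod => a _; apply: measurable_prod => j _.
exact: measurableT_comp (measurable_kernel (T a) _ (mCs a j)).
Qed.

Lemma measurable_rect B Cs : measurable B -> (forall a j, measurable (Cs a j)) ->
  measurable (rect B Cs).
Proof.
move=> mB mCs.
have -> : rect B Cs = x @^-1` B `&`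
    \bigcap_(k in [set: (Act * 'I_M)%type]) (y1 k.1 k.2 @^-1` Cs k.1 k.2).
  apply/seteqP; split => w /=.
    by move=> [Bw Cw]; split => // -[a j] _; exact: Cw.
  by move=> [Bw Cw]; split => // a j; exact: (Cw (a, j)).
apply: measurableI; first by rewrite -[X in measurable X]setTI; exact: mx.
apply: fin_bigcap_measurable; first exact: finite_finset.
by move=> [a j] _; rewrite -[X in measurable X]setTI; exact: my.
Qed.

Lemma prob_rect_sample2 B Cs Cs' : measurable B ->
  (forall a j, measurable (Cs a j)) -> (forall a j, measurable (Cs' a j)) ->
  P (rect B Cs `&` [set w | forall a j, Cs' a j (y2 a j w)]) =
  \int[eta]_(z in B) (kprod_mass Cs z * kprod_mass Cs' z)%:E.
Proof.
move=> mB mCs mCs'.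
pose C (i : 'I_2) := if i == ord0 then Cs else Cs'.
have mC i a j : measurable (C i a j) by rewrite /C; case: ifP.
have -> : rect B Cs `&` [set w | forall a j, Cs' a j (y2 a j w)] =
    [set w | B (x w) /\ forall i a j, C i a j (y i a j w)].
  apply/seteqP; split => w /=.
    by move=> [[Bw C1w] C2w]; split=> // i; case: (ord2_cases i) => ->.
  move=> [Bw Cw]; split; first by split=> // a j; exact: (Cw ord0).
  by move=> a j; exact: (Cw (lift ord0 ord0)).
rewrite (law mB mC); apply: eq_integral => z _.
by rewrite big_ord_recl big_ord1.
Qed.

Lemma prob_rect B Cs : measurable B -> (forall a j, measurable (Cs a j)) ->
  P (rect B Cs) = \int[eta]_(z in B) (kprod_mass Cs z)%:E.
Proof.
move=> mB mCs; have := prob_rect_sample2 mB mCs (fun _ _ => measurableT).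
have -> : [set w | forall a j, [set: X] (y2 a j w)] = setT by apply/seteqP.
rewrite setIT => ->; apply: eq_integral => z _.
by rewrite kprod_mass_setT mulr1.
Qed.

Lemma prob_rect_y2 B Cs a j C : measurable B -> (forall a j, measurable (Cs a j)) ->
  measurable C ->
  P (rect B Cs `&` y2 a j @^-1` C) =
  \int[eta]_(z in B) (kprod_mass Cs z * fine (T a z C))%:E.
Proof.
move=> mB mCs mC.
pose Cs' b k := if (b == a) && (k == j) then C else setT.
have mCs' b k : measurable (Cs' b k) by rewrite /Cs'; case: ifP.
have -> : y2 a j @^-1` C = [set w | forall b k, Cs' b k (y2 b k w)].
  apply/seteqP; split => w /=.
    by move=> Cw b k; rewrite /Cs'; case: ifP => // /andP[/eqP -> /eqP ->].
  by move=> /(_ a j); rewrite /Cs' !eqxx.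
rewrite prob_rect_sample2//; apply: eq_integral => z _.
by rewrite kprod_mass_single.
Qed.

Lemma eta_law B : measurable B -> eta B = P (x @^-1` B).
Proof.
move=> mB; have -> : x @^-1` B = rect B (fun _ _ => setT).
  by apply/seteqP; split => w /= => [Bw|[]//]; split.
rewrite prob_rect//; under eq_integral do rewrite kprod_mass_setT.
by rewrite integral_cst// mul1e.
Qed.

(* A pi-system generating the sigma-algebra of [(x, y_1)]. *)
Definition rect_system : set (set Omega) := [set E | exists B Cs,
  [/\ measurable B, (forall a j, measurable (Cs a j)) & E = rect B Cs]].

Definition Omega_xy1 := g_sigma_algebraType rect_system.

Lemma rect_system_setI : setI_closed rect_system.
Proof.
move=> _ _ [B [Cs [mB mCs ->]]] [B' [Cs' [mB' mCs' ->]]].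
exists (B `&` B'), (fun a j => Cs a j `&` Cs' a j); split.
- exact: measurableI.
- by move=> a j; exact: measurableI.
apply/seteqP; split => w /=.
  move=> [[Bw Cw] [B'w C'w]]; split; first by split.
  by move=> a j; split; [exact: Cw|exact: C'w].
by move=> [[Bw B'w] Cw]; split; split=> // a j; have [] := Cw a j.
Qed.

Lemma sigma_rect_measurable E : <<s rect_system >> E -> measurable E.
Proof.
have sub_measurable : rect_system `<=` measurable.
  by move=> _ [B [Cs [mB mCs ->]]]; exact: measurable_rect.
exact: (smallest_sub (sigma_algebra_measurable _) sub_measurable).
Qed.

Lemma measurable_x_sigma_rect : measurable_fun (setT : set Omega_xy1) x.
Proof.
move=> _ B mB; rewrite setTI; apply: sub_gen_smallest.
exists B, (fun _ _ => setT); split => //.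
by apply/seteqP; split => w /= => [Bw|[]//]; split.
Qed.

Lemma measurable_y1_sigma_rect a j : measurable_fun (setT : set Omega_xy1) (y1 a j).
Proof.
move=> _ C mC; rewrite setTI; apply: sub_gen_smallest.
exists setT, (fun b k => if (b == a) && (k == j) then C else setT); split => //.
  by move=> b k; case: ifP.
apply/seteqP; split => w /=.
  by move=> Cw; split => // b k; case: ifP => // /andP[/eqP -> /eqP ->].
by move=> [_ /(_ a j)]; rewrite !eqxx.
Qed.

Lemma integral_unit_fin_num (E : set Omega) (f : Omega -> R) : measurable E ->
  measurable_fun setT f -> (forall w, 0 <= f w <= 1)%R ->
  \int[P]_(w in E) (f w)%:E \is a fin_num.
Proof.
move=> mE mf f01; rewrite ge0_fin_numE; last first.
  by apply: integral_ge0 => w _; rewrite lee_fin; case/andP: (f01 w).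
apply: (@le_lt_trans _ _ (\int[P]_(w in E) (cst 1%:E) w)).
  apply: ge0_le_integral => //.
  - by move=> w _; rewrite lee_fin; case/andP: (f01 w).
  - exact/measurable_EFinP/measurable_funTS.
  - by move=> w _; rewrite lee_fin; case/andP: (f01 w).
rewrite integral_cst// mul1e (@le_lt_trans _ _ 1) ?ltry//.
exact: probability_le1.
Qed.

Lemma integral_eta_law (f : X -> \bar R) : measurable_fun setT f ->
  (forall z, 0 <= f z) -> \int[eta]_z f z = \int[P]_w f (x w).
Proof.
move=> mf f_ge0; rewrite (eq_measure_integral (pushforward P x)); last first.
  by move=> B mB _; exact: eta_law.
by rewrite ge0_integral_pushforward.
Qed.

Lemma integral_rect_x B Cs (f : X -> R) : measurable B ->
  (forall a j, measurable (Cs a j)) ->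
  (forall z, 0 <= f z)%R -> measurable_fun setT f ->
  \int[P]_(w in rect B Cs) (f (x w))%:E =
  \int[eta]_(z in B) (kprod_mass Cs z * f z)%:E.
Proof.
move=> mB mCs f_ge0 mf; have mR := measurable_rect mB mCs.
transitivity (mixture_integral P (\1_(rect B Cs)) (fun w => \d_(x w)) f).
  rewrite integral_in_indic; apply: eq_integral => w _.
  by rewrite integral_dirac_EFin.
transitivity (mixture_integral eta (fun z => \1_B z * kprod_mass Cs z)%R
    (fun z => \d_z) f); last first.
  rewrite integral_in_indic; apply: eq_integral => z _.
  by rewrite integral_dirac_EFin// -!EFinM mulrA.
apply: eq_mixture_integral => //.
- by move=> U mU; exact: measurableT_comp (measurable_fun_dirac mU) mx.
- by move=> z; rewrite mulr_ge0 ?kprod_mass_ge0// indicE.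
- apply: measurable_funM; first exact: measurable_indic.
  exact: measurable_kprod_mass.
- by move=> U mU; exact: measurable_fun_dirac.
move=> C mC; rewrite integral_indic_dirac//.
have -> : rect B Cs `&` x @^-1` C = rect (B `&` C) Cs.
  by apply/seteqP; split => w /= => [[[Bw Cw] xC]|[[Bw xC] Cw]].
apply: eq_trans; first exact: prob_rect (measurableI _ _ mB mC) mCs.
rewrite [LHS]integral_in_indic; apply: eq_integral => z _.
by rewrite /dirac indicI -!EFinM mulrAC.
Qed.

(** * Conditional unbiasedness of the second sample *)

Section conditional_mean.
Variable g : X -> R.
Hypothesis g_B1 : inB1 g.

Let mg : measurable_fun setT g := g_B1.1.
Let g_ge0 v : (0 <= g v)%R := (andP (g_B1.2 v)).1.
Let g_le1 v : (g v <= 1)%R := (andP (g_B1.2 v)).2.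

Definition kmean a z : R := fine (\int[T a z]_v (g v)%:E).

Lemma integral_kernel_le1 a z : \int[T a z]_v (g v)%:E <= 1.
Proof.
apply: (@le_trans _ _ (\int[T a z]_v (cst 1%:E) v)).
  apply: ge0_le_integral => //.
  - by move=> v _; rewrite lee_fin.
  - exact/measurable_EFinP.
  - by move=> v _; rewrite lee_fin.
by rewrite integral_cst// mul1e prob_kernel.
Qed.

Lemma kmeanE a z : \int[T a z]_v (g v)%:E = (kmean a z)%:E.
Proof.
have int_ge0 : 0 <= \int[T a z]_v (g v)%:E.
  by apply: integral_ge0 => v _; rewrite lee_fin.
rewrite /kmean fineK// ge0_fin_numE//.
exact: le_lt_trans (integral_kernel_le1 a z) (ltry _).
Qed.

Lemma kmean_ge0 a z : (0 <= kmean a z)%R.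
Proof. by rewrite -lee_fin -kmeanE; apply: integral_ge0 => v _; rewrite lee_fin. Qed.

Lemma kmean_le1 a z : (kmean a z <= 1)%R.
Proof. by rewrite -lee_fin -kmeanE integral_kernel_le1. Qed.

Lemma measurable_kmean a : measurable_fun setT (kmean a).
Proof.
apply: measurableT_comp (measurable_fun_integral_kernel _ _ _) => //.
- by move=> U mU; exact: measurable_kernel.
- exact/measurable_EFinP.
Qed.

Lemma integral_rect_y2 B Cs a j : measurable B ->
  (forall a j, measurable (Cs a j)) ->
  \int[P]_(w in rect B Cs) (g (y2 a j w))%:E =
  \int[P]_(w in rect B Cs) (kmean a (x w))%:E.
Proof.
move=> mB mCs; have mR := measurable_rect mB mCs.
rewrite integral_rect_x//; last 2 first.
- exact: kmean_ge0.
- exact: measurable_kmean.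
transitivity (mixture_integral P (\1_(rect B Cs)) (fun w => \d_(y2 a j w)) g).
  rewrite integral_in_indic; apply: eq_integral => w _.
  by rewrite integral_dirac_EFin.
transitivity (mixture_integral eta (fun z => \1_B z * kprod_mass Cs z)%R
    (fun z => T a z) g); last first.
  rewrite integral_in_indic; apply: eq_integral => z _.
  by rewrite kmeanE -!EFinM mulrA.
apply: eq_mixture_integral => //.
- by move=> U mU; exact: measurableT_comp (measurable_fun_dirac mU) (my _ _ _).
- by move=> z; rewrite mulr_ge0 ?kprod_mass_ge0// indicE.
- apply: measurable_funM; first exact: measurable_indic.
  exact: measurable_kprod_mass.
- by move=> U mU; exact: measurable_kernel.
move=> C mC; rewrite integral_indic_dirac//; last exact: my.
apply: eq_trans; first exact: prob_rect_y2.
rewrite [LHS]integral_in_indic; apply: eq_integral => z _.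
by rewrite -EFinM mulrA EFinM fineK// kernel_fin_num.
Qed.

(* That is, [E[g (y_2 a j) | x, y_1] = \int[T a x] g]. *)
Lemma integral_sigma_rect_y2 a j E : <<s rect_system >> E ->
  \int[P]_(w in E) (g (y2 a j w))%:E = \int[P]_(w in E) (kmean a (x w))%:E.
Proof.
have mgy : measurable_fun setT (fun w => g (y2 a j w)).
  exact: measurableT_comp mg (my _ _ _).
have mqx : measurable_fun setT (fun w => kmean a (x w)).
  exact: measurableT_comp (measurable_kmean a) mx.
have rectT : rect setT (fun _ _ => setT) = setT by apply/seteqP.
pose Q (E : set Omega_xy1) := measurable (E : set Omega) /\
  \int[P]_(w in E) (g (y2 a j w))%:E = \int[P]_(w in E) (kmean a (x w))%:E.
suff : forall E, <<s rect_system >> E -> Q E by move=> H /H [].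
apply: (@dynkin_induction _ Omega_xy1 rect_system Q) => //.
- exact: rect_system_setI.
- by split => //; rewrite -rectT; exact: integral_rect_y2.
- move=> _ [B [Cs [mB mCs ->]]]; split; first exact: measurable_rect.
  exact: integral_rect_y2.
- move=> S _ [mS eqS]; split; first exact: measurableC.
  apply: eq_integral_setC => //.
  - by move=> w; exact: kmean_ge0.
  - apply: integral_unit_fin_num => // w.
    by rewrite kmean_ge0 kmean_le1.
  - by rewrite -rectT; exact: integral_rect_y2.
- move=> F _ tF QF; have mF n := (QF n).1; split.
    exact: bigcupT_measurable.
  rewrite !ge0_integral_bigcup//.
  + by apply: eq_eseriesr => n _; exact: (QF n).2.
  + exact/measurable_EFinP/measurable_funTS.
  + by move=> w _; rewrite lee_fin kmean_ge0.
  + exact/measurable_EFinP/measurable_funTS.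
  + by move=> w _; rewrite lee_fin.
Qed.

Hypothesis M_gt0 : (0 < M)%N.

Definition emp_mean (ys : 'I_M -> X) : R := (M%:R^-1 * \sum_(j < M) g (ys j))%R.

Lemma emp_mean_ge0 ys : (0 <= emp_mean ys)%R.
Proof. by rewrite mulr_ge0 ?invr_ge0// sumr_ge0. Qed.

Lemma measurable_emp_mean d0 (T' : measurableType d0) (ys : 'I_M -> T' -> X) :
  (forall j, measurable_fun setT (ys j)) ->
  measurable_fun setT (fun w => emp_mean (fun j => ys j w)).
Proof.
move=> mys; apply: measurable_funM; first exact: measurable_cst.
by apply: measurable_sum => j; exact: measurableT_comp mg (mys j).
Qed.

Lemma integral_sigma_rect_emp_mean a E : <<s rect_system >> E ->
  \int[P]_(w in E) (emp_mean (fun j => y2 a j w))%:E =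
  \int[P]_(w in E) (kmean a (x w))%:E.
Proof.
move=> sE; have mE := sigma_rect_measurable sE.
have integral_avg (f : 'I_M -> Omega -> R) : (forall j, measurable_fun setT (f j)) ->
    (forall j w, 0 <= f j w)%R ->
    \int[P]_(w in E) (M%:R^-1 * \sum_(j < M) f j w)%:E =
    M%:R^-1%:E * \sum_(j < M) \int[P]_(w in E) (f j w)%:E.
  move=> mf f_ge0; under eq_integral do rewrite EFinM.
  rewrite ge0_integralZl_EFin//; last 2 first.
  - by move=> w _; rewrite lee_fin sumr_ge0.
  - by apply/measurable_EFinP/measurable_funTS; exact: measurable_sum.
  under eq_integral do rewrite -sumEFin.
  rewrite ge0_integral_sum//.
  - by move=> j; exact/measurable_EFinP/measurable_funTS.
  - by move=> j w _; rewrite lee_fin.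
transitivity (\int[P]_(w in E) (M%:R^-1 * \sum_(j < M) kmean a (x w))%:E).
  rewrite [RHS]integral_avg; last 2 first.
  - by move=> j; exact: measurableT_comp (measurable_kmean a) mx.
  - by move=> j w; exact: kmean_ge0.
  rewrite /emp_mean integral_avg; last 2 first.
  - by move=> j; exact: measurableT_comp mg (my _ _ _).
  - by move=> j w.
  by congr (_ * _); apply: eq_bigr => j _; exact: integral_sigma_rect_y2.
apply: eq_integral => w _; rewrite sumr_const card_ord.
by rewrite -[(kmean a (x w) *+ M)%R]mulr_natl mulrA mulVf ?mul1r// pnatr_eq0 -lt0n.
Qed.

Section bigmax_estimate.
Hypothesis Act0 : (0 < #|Act|)%N.

Let u a w := emp_mean (fun j => y1 a j w).
Let t a w := emp_mean (fun j => y2 a j w).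
Let q a w := kmean a (x w).
Let umax w := (\big[Num.max/0]_a u a w)%R.
Let qmax w := (\big[Num.max/0]_a q a w)%R.
Let dmax w := (\big[Num.max/0]_a `|u a w - t a w|)%R.

(* The events [Ap a], [Am a] (a in Act) partition Omega according to the larger of
   the two maxima and its first maximizer; they are measurable in [(x, y_1)], so the
   indicator sums below have equal integrals with [t] and with [q]. *)
Let Ap a := [set w | (qmax w <= umax w)%R /\ first_argmax (u ^~ w) a].
Let Am a := [set w | (umax w < qmax w)%R /\ first_argmax (q ^~ w) a].

Lemma bigmax_dist_indic_sum w :
  (`|umax w - qmax w| + (indic_sum Ap q w + indic_sum Am t w) <=
   dmax w + (indic_sum Ap t w + indic_sum Am q w))%R.
Proof.
have [i0 _] := card_gt0P Act0.
have dmax_ge a : (`|u a w - t a w| <= dmax w)%R by exact: le_bigmax.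
case: (leP (qmax w) (umax w)) => [qu|uq].
- have [a ua] := first_argmax_exists (u ^~ w) i0.
  have Ap_a b : Ap b w <-> b = a.
    by split => [[_ ub]|->]; [exact: first_argmax_uniq ub ua|split].
  have Am0 b : ~ Am b w by move=> [/(le_lt_trans qu)]; rewrite ltxx.
  rewrite (indic_sum_single q Ap_a) (indic_sum_single t Ap_a).
  rewrite (indic_sum0 t Am0) (indic_sum0 q Am0).
  have : (`|umax w - qmax w| <= u a w - q a w)%R.
    exact: bigmax_dist_le (fun b => emp_mean_ge0 _) ua.1 qu.
  have := dmax_ge a; have := ler_norm (u a w - t a w); lra.
- have [a qa] := first_argmax_exists (q ^~ w) i0.
  have Am_a b : Am b w <-> b = a.
    by split => [[_ qb]|->]; [exact: first_argmax_uniq qb qa|split].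
  have Ap0 b : ~ Ap b w by move=> [/(lt_le_trans uq)]; rewrite ltxx.
  rewrite (indic_sum_single q Am_a) (indic_sum_single t Am_a).
  rewrite (indic_sum0 t Ap0) (indic_sum0 q Ap0).
  have : (`|umax w - qmax w| <= q a w - u a w)%R.
    by rewrite distrC; exact: bigmax_dist_le (fun b => kmean_ge0 _ _) qa.1 (ltW uq).
  have := dmax_ge a; have := ler_norm (t a w - u a w); rewrite distrC; lra.
Qed.

Lemma bigmaxe_integral_kernel z :
  \big[maxe/-oo]_a \int[T a z]_v (g v)%:E = (\big[Num.max/0]_a kmean a z)%:E.
Proof.
have [i0 _] := card_gt0P Act0.
rewrite -(bigmaxe_EFin i0); last by move=> a; exact: kmean_ge0.
by apply: eq_bigr => a _; rewrite kmeanE.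
Qed.

Lemma measurable_u a : measurable_fun setT (u a).
Proof. by apply: measurable_emp_mean => j; exact: my. Qed.

Lemma measurable_t a : measurable_fun setT (t a).
Proof. by apply: measurable_emp_mean => j; exact: my. Qed.

Lemma measurable_q a : measurable_fun setT (q a).
Proof. exact: measurableT_comp (measurable_kmean a) mx. Qed.

Lemma measurable_umax : measurable_fun setT umax.
Proof. by apply: measurable_bigmax => a; exact: measurable_u. Qed.

Lemma measurable_qmax : measurable_fun setT qmax.
Proof. by apply: measurable_bigmax => a; exact: measurable_q. Qed.

Lemma sigma_rect_Ap_Am a : <<s rect_system >> (Ap a) /\ <<s rect_system >> (Am a).
Proof.
have mu1 b : measurable_fun (setT : set Omega_xy1) (u b).
  by apply: measurable_emp_mean => j; exact: measurable_y1_sigma_rect.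
have mq1 b : measurable_fun (setT : set Omega_xy1) (q b).
  exact: measurableT_comp (measurable_kmean b) measurable_x_sigma_rect.
have mumax : measurable_fun (setT : set Omega_xy1) umax by exact: measurable_bigmax.
have mqmax : measurable_fun (setT : set Omega_xy1) qmax by exact: measurable_bigmax.
split; apply: (@measurableI _ Omega_xy1).
- exact: measurable_ler.
- exact: measurable_first_argmax.
- exact: measurable_ltr.
- exact: measurable_first_argmax.
Qed.

Lemma integral_bigmax_dist_le :
  \int[P]_w (`|umax w - qmax w|)%:E <= \int[P]_w (dmax w)%:E.
Proof.
have mAp a := sigma_rect_measurable (sigma_rect_Ap_Am a).1.
have mAm a := sigma_rect_measurable (sigma_rect_Ap_Am a).2.
have t_ge0 a w : (0 <= t a w)%R by exact: emp_mean_ge0.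
have q_ge0 a w : (0 <= q a w)%R by exact: kmean_ge0.
have eq_t_q A : (forall a, <<s rect_system >> (A a)) ->
    \int[P]_w (indic_sum A t w)%:E = \int[P]_w (indic_sum A q w)%:E.
  move=> sA; have mA a := sigma_rect_measurable (sA a).
  rewrite !integral_indic_sum//; [|exact: measurable_q|exact: measurable_t].
  by apply: eq_bigr => a _; exact: integral_sigma_rect_emp_mean.
have fin_q A : (forall a, measurable (A a)) ->
    \int[P]_w (indic_sum A q w)%:E \is a fin_num.
  move=> mA; rewrite integral_indic_sum//; last exact: measurable_q.
  apply/sum_fin_numP => a _ _; apply: integral_unit_fin_num => //.
    exact: measurable_q.
  by move=> w; rewrite q_ge0 kmean_le1.
have [mApq mApt mAmq mAmt] : [/\ measurable_fun setT (indic_sum Ap q),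
    measurable_fun setT (indic_sum Ap t), measurable_fun setT (indic_sum Am q)
    & measurable_fun setT (indic_sum Am t)].
  by split; apply: measurable_indic_sum => //;
    first [exact: measurable_q|exact: measurable_t].
have [Apq_ge0 Apt_ge0 Amq_ge0 Amt_ge0] : [/\ forall w, (0 <= indic_sum Ap q w)%R,
    forall w, (0 <= indic_sum Ap t w)%R, forall w, (0 <= indic_sum Am q w)%R
    & forall w, (0 <= indic_sum Am t w)%R].
  by split=> w; apply: indic_sum_ge0.
apply: (le_integral_add_cancel
  (h := fun w => (indic_sum Ap q w + indic_sum Am t w)%R)
  (k := fun w => (indic_sum Ap t w + indic_sum Am q w)%R)).
- apply: measurableT_comp; first exact: normr_measurable.
  exact: measurable_funB measurable_umax measurable_qmax.
- apply: measurable_bigmax => a; apply: measurableT_comp; first exact: normr_measurable.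
  by apply: measurable_funB; [exact: measurable_u|exact: measurable_t].
- exact: measurable_funD.
- exact: measurable_funD.
- by [].
- by move=> w; exact: bigmax_ge_id.
- by move=> w; rewrite addr_ge0.
- by move=> w; rewrite addr_ge0.
- exact: bigmax_dist_indic_sum.
- rewrite !ge0_integralD_EFin//.
  by rewrite (eq_t_q _ (fun a => (sigma_rect_Ap_Am a).1))
    (eq_t_q _ (fun a => (sigma_rect_Ap_Am a).2)).
- rewrite ge0_integralD_EFin//.
  rewrite (eq_t_q _ (fun a => (sigma_rect_Ap_Am a).2)) fin_numD.
  by rewrite !fin_q.
Qed.

Lemma integral_dist_bigmax_le (W : X -> R) : measurable_fun setT W ->
  \int[P]_w (`|W (x w) - qmax w|)%:E <=
  \int[P]_w (`|W (x w) - umax w|)%:E + \int[P]_w (dmax w)%:E.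
Proof.
move=> mW.
have mWx : measurable_fun setT (fun w => W (x w)) by exact: measurableT_comp mW mx.
have mumax := measurable_umax; have mqmax := measurable_qmax.
have mdist (f h : Omega -> R) : measurable_fun setT f -> measurable_fun setT h ->
    measurable_fun setT (fun w => `|f w - h w|)%R.
  move=> mf mh; apply: measurableT_comp; first exact: normr_measurable.
  exact: measurable_funB.
apply: le_trans (leeD2l _ integral_bigmax_dist_le).
rewrite -ge0_integralD_EFin//; try exact: mdist.
apply: ge0_le_integral => //.
- by apply/measurable_EFinP; exact: mdist.
- by apply/measurable_EFinP; apply: measurable_funD; exact: mdist.
- by move=> w _; rewrite lee_fin ler_distD.
Qed.

End bigmax_estimate.

End conditional_mean.

End sampling.

Lemma stepfun_inB1 (R : realType) (dX : measure_display) (X : measurableType dX)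
    (SA SK : set X) (W : X -> R) :
  measurable SA -> measurable SK -> inB1 W -> inB1 (stepfun SA SK W).
Proof.
move=> mSA mSK [mW W01]; split.
  apply: measurable_funD; first exact: measurable_indic.
  by apply: measurable_funM => //; apply: measurable_indic; exact: measurableD.
move=> v; rewrite /stepfun !indicE in_setD.
by case: (v \in SK); case: (v \in SA);
  rewrite /= ?mul0r ?mul1r ?addr0 ?add0r ?lexx ?ler01 ?W01.
Qed.

Theorem mainTheorem7 (R : realType) (dX : measure_display) (X : measurableType dX)
  (Act : finType) (T : Act -> R.-pker X ~> X) (SA SK : set X)
  (Wk Wk1 : X -> R) (eta : probability X R) (M : nat)
  (dO : measure_display) (Omega : measurableType dO) (P : probability Omega R)
  (x : Omega -> X) (y : 'I_2 -> Act -> 'I_M -> Omega -> X) :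
  (0 < #|Act|)%N ->
  measurable SA -> measurable SK ->
  inB1 Wk -> inB1 Wk1 ->
  eta (~` (SA `\` SK)) = 0%E ->
  (1 <= M)%N ->
  measurable_fun setT x ->
  (forall i a j, measurable_fun setT (y i a j)) ->
  sampling_law P T eta x y ->
  (norm1 eta SA SK (fun z => (Wk z)%:E - Top T SA SK Wk1 z)%E <=
   \int[P]_w (`| Wk (x w) -
        \big[Num.max/0]_(a : Act) That SA SK Wk1 (fun j => y ord0 a j w) |)%:E +
   \int[P]_w (\big[Num.max/0]_(a : Act)
        `| That SA SK Wk1 (fun j => y ord0 a j w) - That SA SK Wk1 (fun j => y (lift ord0 ord0) a j w) |)%:E)%E.
Proof.
move=> Act0 mSA mSK [mWk _] Wk1_B1 eta0 M_gt0 mx my law.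
have g_B1 := stepfun_inB1 mSA mSK Wk1_B1.
pose qmax z := (\big[Num.max/0]_a kmean T (stepfun SA SK Wk1) a z)%R.
have mdist : measurable_fun setT (fun z => (`|Wk z - qmax z|)%:E).
  apply/measurable_EFinP; apply: measurableT_comp; first exact: normr_measurable.
  apply: measurable_funB => //; apply: measurable_bigmax => a.
  exact: measurable_kmean.
rewrite /norm1 /Top.
under eq_integral do rewrite bigmaxe_integral_kernel// -EFinB abse_EFin.
rewrite integral_full_set//; last exact: measurableD.
rewrite (integral_eta_law mx law)//.
exact (integral_dist_bigmax_le mx my law g_B1 M_gt0 Act0 mWk).
Qed.
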